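(* Let $d\ge 2$. For a finite subset $V\subset S^{d-1}$ with $|V|\ge 2$ and a region $\mathcal{A}\subseteq S^{d-1}$, let $N(V,\mathcal{A})$ be the minimal number $N$ such that $\mathcal{A}$ can be written as a disjoint union of subregions $\mathcal{A}_1,\dots,\mathcal{A}_N$ with $\operatorname{Diam}(\mathcal{A}_i)<d_{\min}(V)$ for all $i$, and set $$C(V,\mathcal{A})=\pi(\mathcal{A})-\pi^2(\mathcal{A})+\Big(\frac{N(V,\mathcal{A})}{|V|}-1\Big)\pi(\mathcal{A}).$$ Let $V,V'$ be two finite subsets of $S^{d-1}$. If either (1) $|V|=|V'|$ and $d_{\min}(V)>d_{\min}(V')$, or (2) $d_{\min}(V)=d_{\min}(V')$ and $|V|>|V'|$, then $C(V,\mathcal{A})\le C(V',\mathcal{A})$ for every region $\mathcal{A}$ of $S^{d-1}$.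
   Context: $S^{d-1}$ is the unit sphere in $\mathbb{R}^d$ with Euclidean norm $\|\cdot\|$. $d_{\min}(V)=\min\{\|v-v'\| : v,v'\in V,\ v\neq v'\}$. For a region $\mathcal{B}\subseteq S^{d-1}$, $\operatorname{Diam}(\mathcal{B})=\sup\{\|x-x'\|: x,x'\in\mathcal{B}\}$. $\pi$ is the normalized uniform surface probability measure on $S^{d-1}$; regions are measurable subsets of $S^{d-1}$ admitting such finite decompositions. (The quantity $C(V,\mathcal{A})$ is an upper bound for the variance of $\frac{1}{|V|}\sum_{v\in V}I_{\mathcal{A}}(Tv)$ with $T$ Haar-uniform on $O(d)$.) *)

From HB Require Import structures.
From mathcomp Require Import all_boot all_order all_algebra.
From mathcomp Require Import all_classical all_reals all_analysis.
Set Implicit Arguments. Unset Strict Implicit. Unset Printing Implicit Defensive.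
Import Order.TTheory GRing.Theory Num.Theory.
Import numFieldNormedType.Exports.
Local Open Scope classical_set_scope.
Local Open Scope ring_scope.

Section Defs.
Variables (R : realType) (d : nat).
Notation vec := 'rV[R]_d.

(* Euclidean norm on R^d (the library's matrix norm is the sup norm) *)
Definition enorm (x : vec) : R := Num.sqrt (\sum_(i < d) x ord0 i ^+ 2).

Definition sphere : set vec := [set x | enorm x = 1].

Definition borel (A : set vec) : Prop := <<s [set U : set vec | open U] >> A.

Definition box (a b : vec) : set vec :=
  [set x | forall i, a ord0 i <= x ord0 i <= b ord0 i].
Definition box_vol (a b : vec) : R :=
  \prod_(i < d) Num.max (b ord0 i - a ord0 i) 0.
Definition lebesgue_outer (E : set vec) : \bar R :=
  ereal_inf [set s | exists a b : nat -> vec,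
     E `<=` \bigcup_k box (a k) (b k) /\
     s = (\sum_(0 <= k <oo) (box_vol (a k) (b k))%:E)%E].

Definition cone (A : set vec) : set vec :=
  [set y | exists t x, 0 < t <= 1 /\ A x /\ y = t *: x].

(* normalized uniform surface probability measure on S^{d-1}
   (cone-measure construction: pi(A) = vol(cone A) / vol(cone S^{d-1})) *)
Definition pi_sphere (A : set vec) : R :=
  fine (lebesgue_outer (cone A)) / fine (lebesgue_outer (cone sphere)).

(* diameter (sup of pairwise Euclidean distances; -oo for the empty set) *)
Definition Diam (B : set vec) : \bar R :=
  ereal_sup [set r | exists x y, B x /\ B y /\ r = (enorm (x - y))%:E].

(* minimal distance of a finite set V (given as a duplicate-free list) *)
Definition dmin (V : seq vec) : \bar R :=
  ereal_inf [set r | exists v w, v \in V /\ w \in V /\ v <> w /\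
                                 r = (enorm (v - w))%:E].

Definition decomp (delta : \bar R) (A : set vec) (n : nat) : Prop :=
  exists P : nat -> set vec,
    (forall i, (i < n)%N -> borel (P i)) /\
    A = \bigcup_(i in [set i | (i < n)%N]) P i /\
    trivIset [set i | (i < n)%N] P /\
    (forall i, (i < n)%N -> (Diam (P i) < delta)%E).

Definition region (A : set vec) : Prop :=
  A `<=` sphere /\ borel A /\
  forall delta : R, 0 < delta -> exists n, decomp delta%:E A n.

Definition Nmin (V : seq vec) (A : set vec) : nat :=
  xget 0%N [set n | decomp (dmin V) A n /\
                    forall m, decomp (dmin V) A m -> (n <= m)%N].

Definition Cbound (V : seq vec) (A : set vec) : R :=
  pi_sphere A - pi_sphere A ^+ 2
  + ((Nmin V A)%:R / (size V)%:R - 1) * pi_sphere A.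

End Defs.

(** The first two terms of [C(V, A)] do not depend on [V], and [pi A >= 0],
    so it suffices to compare [N(V, A) / |V|] with [N(V', A) / |V'|].
    A decomposition into pieces of diameter [< dmin V'] also has pieces of
    diameter [< dmin V] when [dmin V' <= dmin V], so [N] is antitone in
    [dmin]; and [N] depends on [V] only through [dmin V]. *)
From HB Require Import structures.
From mathcomp Require Import all_boot all_order all_algebra.
From mathcomp Require Import all_classical all_reals all_analysis.
Set Implicit Arguments. Unset Strict Implicit. Unset Printing Implicit Defensive.
Import Order.TTheory GRing.Theory Num.Theory.
Local Open Scope classical_set_scope.
Local Open Scope ring_scope.

Lemma exists_gt0_lb_seq (R : realDomainType) (T : eqType) (s : seq T)
    (P : T -> Prop) (f : T -> R) :
  (forall t, t \in s -> P t -> 0 < f t) ->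
  exists2 e, 0 < e & forall t, t \in s -> P t -> e <= f t.
Proof.
elim: s => [|x s IHs] f_gt0; first by exists 1.
have [e e_gt0 le_e] := IHs (fun t st => f_gt0 t (@mem_behead _ (x :: s) t st)).
have [Px|nPx] := pselect (P x); last first.
  by exists e => // t; rewrite inE => /orP[/eqP->|st] Pt //; apply: le_e.
exists (Num.min e (f x)); first by rewrite lt_min e_gt0 f_gt0 ?mem_head.
move=> t; rewrite inE => /orP[/eqP->|st] Pt; first by rewrite ge_min lexx orbT.
by rewrite ge_min le_e.
Qed.

Section SphereCodes.
Variables (R : realType) (d : nat).
Notation vec := 'rV[R]_d.

Lemma lebesgue_outer_ge0 (E : set vec) : (0 <= lebesgue_outer E)%E.
Proof.
apply/ereal_infP => _ [a [b [_ ->]]]; apply: nneseries_ge0 => k _ _.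
by rewrite lee_fin; apply: prodr_ge0 => i _; rewrite le_max lexx orbT.
Qed.

Lemma pi_sphere_ge0 (A : set vec) : 0 <= pi_sphere A.
Proof. by apply: divr_ge0; apply/fine_ge0/lebesgue_outer_ge0. Qed.

Lemma enorm_gt0 (x : vec) : x != 0 -> 0 < enorm x.
Proof.
move=> x_neq0; rewrite sqrtr_gt0 lt_def sumr_ge0 ?andbT => [|i _]; last first.
  exact: sqr_ge0.
apply/eqP => /psumr_eq0P x2_eq0; move/eqP: x_neq0; apply; apply/matrixP => i j.
rewrite !mxE (ord1 i); apply/eqP; rewrite -sqrf_eq0; apply/eqP.
by apply: x2_eq0 => // k _; apply: sqr_ge0.
Qed.

Lemma dmin_gt0 (V : seq vec) : exists2 e : R, 0 < e & (e%:E <= dmin V)%E.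
Proof.
have [e e_gt0 le_e] := @exists_gt0_lb_seq _ _ [seq (v, w) | v <- V, w <- V]
  (fun p => p.1 <> p.2) (fun p => enorm (p.1 - p.2))
  (fun p _ p12 => enorm_gt0 (introN eqP (fun p0 => p12 (subr0_eq p0)))).
exists e => //; apply/ereal_infP => _ [v [w [Vv [Vw [vw ->]]]]].
by rewrite lee_fin (le_e (v, w)) // (allpairs_f pair Vv Vw).
Qed.

Lemma decomp_le (delta delta' : \bar R) (A : set vec) (n : nat) :
  (delta <= delta')%E -> decomp delta A n -> decomp delta' A n.
Proof.
move=> le_delta [P [borelP [defA [trivP DiamP]]]].
exists P; do 3 split => //.
by move=> i lt_in; apply: lt_le_trans (DiamP i lt_in) le_delta.
Qed.

Lemma region_decomp_dmin (V : seq vec) (A : set vec) :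
  region A -> exists n, decomp (dmin V) A n.
Proof.
move=> [_ [_ decompA]]; have [e e_gt0 le_e] := dmin_gt0 V.
by have [n An] := decompA e e_gt0; exists n; apply: decomp_le An.
Qed.

Lemma Nmin_spec (V : seq vec) (A : set vec) (m : nat) :
  decomp (dmin V) A m ->
  decomp (dmin V) A (Nmin V A) /\
  forall k, decomp (dmin V) A k -> (Nmin V A <= k)%N.
Proof.
move=> Am.
have exA : exists n, `[< decomp (dmin V) A n >] by exists m; apply/asboolP.
have [n /asboolP An n_min] := ex_minnP exA.
have exNmin : exists n, decomp (dmin V) A n /\
                       forall k, decomp (dmin V) A k -> (n <= k)%N.
  by exists n; split => // k Ak; apply: n_min; apply/asboolP.
exact: (xgetPex 0%N exNmin).
Qed.

Lemma Nmin_le_dmin (V V' : seq vec) (A : set vec) :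
  region A -> (dmin V' <= dmin V)%E -> (Nmin V A <= Nmin V' A)%N.
Proof.
move=> /(region_decomp_dmin V') [m Am] le_dmin.
have [A'N _] := Nmin_spec Am.
have A'N_V := decomp_le le_dmin A'N.
by have [_] := Nmin_spec A'N_V; apply.
Qed.

Lemma Nmin_dmin_eq (V V' : seq vec) (A : set vec) :
  dmin V = dmin V' -> Nmin V A = Nmin V' A.
Proof. by rewrite /Nmin => ->. Qed.

Lemma Cbound_le (V V' : seq vec) (A : set vec) :
  (Nmin V A)%:R / (size V)%:R <= (Nmin V' A)%:R / (size V')%:R :> R ->
  Cbound V A <= Cbound V' A.
Proof.
move=> le_ratio; rewrite /Cbound lerD2l.
by apply: ler_wpM2r; [apply: pi_sphere_ge0 | rewrite lerD2r].
Qed.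

End SphereCodes.

Theorem corollary1 (R : realType) (d : nat) (hd : (2 <= d)%N)
  (V V' : seq 'rV[R]_d) :
  uniq V -> uniq V' ->
  (forall v, v \in V -> sphere v) -> (forall v, v \in V' -> sphere v) ->
  (2 <= size V)%N -> (2 <= size V')%N ->
  ((size V = size V' /\ (dmin V' < dmin V)%E) \/
   (dmin V = dmin V' /\ (size V' < size V)%N)) ->
  forall A : set 'rV[R]_d, region A -> Cbound V A <= Cbound V' A.
Proof.
move=> _ _ _ _ _ sizeV' cases A rA; apply: Cbound_le.
have sizeV'_gt0 : (0 < size V')%N by apply: leq_trans sizeV'.
case: cases => [[-> lt_dmin] | [eq_dmin lt_size]].
  rewrite ler_pM2r ?invr_gt0 ?ltr0n // ler_nat.
  exact: Nmin_le_dmin (ltW lt_dmin).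
rewrite (Nmin_dmin_eq A eq_dmin) ler_wpM2l ?ler0n //.
have sizeV_gt0 : (0 < size V)%N by apply: leq_trans lt_size.
rewrite lef_pV2 ?posrE ?ltr0n // ler_nat.
exact: ltnW.
Qed.
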